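(* Let $\mathcal V$ be a complex topological vector space and $\mathcal D\subseteq\mathcal V_{\rm nc}$ a noncommutative set such that (P2) $UaU^*\in\mathcal D_n$ for all $a\in\mathcal D_n$ and unitary $U\in\mathbb C^{n\times n}$, and (P3) if $\begin{bmatrix}a&0\\0&c\end{bmatrix}\in\mathcal D_{n+m}$ with $a\in\mathcal V^{n\times n},c\in\mathcal V^{m\times m}$, then $a\in\mathcal D_n,c\in\mathcal D_m$. The following statements are equivalent: (i) for all $n,m\in\mathbb N$, $a\in\mathcal D_n$, $c\in\mathcal D_m$, $b\in\mathcal V^{n\times m}$: $\delta_{\mathcal D}(a,c)(b)=0\implies b=0$; (ii) for all $n\in\mathbb N$, $a\in\mathcal D_n$, $b\in\mathcal V^{n\times n}$: $\delta_{\mathcal D}(a,a)(b)=0\implies b=0$; (iii) for all $n\in\mathbb N$, $a,c\in\mathcal D_n$: $\tilde\delta_{\mathcal D}(a,c)=0\implies a=c$; (iv) for every $k\in\mathbb N$ there exists no non-constant noncommutative function $f\colon\mathbb C_{\rm nc}\to(\mathcal D_k)_{\rm nc}$.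
   Context: A noncommutative set is a family $\mathcal D=(\mathcal D_n)$, $\mathcal D_n\subseteq\mathcal V^{n\times n}$, closed under direct sums. For $a\in\mathcal D_n,c\in\mathcal D_m,b\in\mathcal V^{n\times m}$, $\delta_{\mathcal D}(a,c)(b)=\big[\sup\{t\in[0,+\infty]\colon\begin{bmatrix}a&sb\\0&c\end{bmatrix}\in\mathcal D_{n+m}\ \forall s\in[0,t]\}\big]^{-1}\in[0,+\infty]$ ($1/0=+\infty$, $1/\infty=0$), and $\tilde\delta_{\mathcal D}(a,c)=\delta_{\mathcal D}(a,c)(a-c)$ for $a,c\in\mathcal D_n$. $\mathbb C_{\rm nc}=\coprod_p\mathbb C^{p\times p}$, and $(\mathcal D_k)_{\rm nc}$ denotes the nc set over the vector space $\mathcal V^{k\times k}$ whose $p$-th level is $\mathcal D_{kp}$ (identifying $(\mathcal V^{k\times k})^{p\times p}$ with $\mathcal V^{kp\times kp}$). A noncommutative function $f$ between nc sets maps level $p$ to level $p$, respects direct sums and satisfies $f(T^{-1}ZT)=T^{-1}f(Z)T$ for invertible scalar $T$ (acting blockwise). *)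

From HB Require Import structures.
From mathcomp Require Import all_boot all_order all_algebra.
From mathcomp Require Import complex.
From mathcomp Require Import classical_sets reals ereal topology tvs.
Set Implicit Arguments. Unset Strict Implicit. Unset Printing Implicit Defensive.
Import Order.TTheory GRing.Theory Num.Theory.
Local Open Scope ring_scope.
Local Open Scope classical_set_scope.
Local Open Scope complex_scope.

Definition lmulmx (K : pzRingType) (X : lmodType K) (m n r : nat)
  (A : 'M[K]_(m, n)) (W : 'M[X]_(n, r)) : 'M[X]_(m, r) :=
  \matrix_(i, j) \sum_(l < n) A i l *: W l j.

Definition rmulmx (K : pzRingType) (X : lmodType K) (m n r : nat)
  (W : 'M[X]_(m, n)) (A : 'M[K]_(n, r)) : 'M[X]_(m, r) :=
  \matrix_(i, j) \sum_(l < n) A l j *: W i l.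

Definition scalemx (K : pzRingType) (X : lmodType K) (m n : nat)
  (x : K) (W : 'M[X]_(m, n)) : 'M[X]_(m, n) := \matrix_(i, j) (x *: W i j).

Definition adjmx (R : rcfType) (n : nat) (U : 'M[R[i]]_n) : 'M[R[i]]_n :=
  (map_mx (fun x => x^*) U)^T.

Definition unitary (R : rcfType) (n : nat) (U : 'M[R[i]]_n) : Prop :=
  U *m adjmx U = 1%:M.

Definition nc_set (K : pzRingType) (V : lmodType K) (D : forall n : nat, set 'M[V]_n) : Prop :=
  forall (n m : nat) (a : 'M[V]_n) (c : 'M[V]_m), (0 < n)%N -> (0 < m)%N ->
    D n a -> D m c -> D (n + m)%N (block_mx a 0 0 c).

Definition P2 (R : rcfType) (V : lmodType R[i]) (D : forall n : nat, set 'M[V]_n) : Prop :=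
  forall (n : nat) (a : 'M[V]_n) (U : 'M[R[i]]_n), (0 < n)%N ->
    D n a -> unitary U -> D n (rmulmx (lmulmx U a) (adjmx U)).

Definition P3 (K : pzRingType) (V : lmodType K) (D : forall n : nat, set 'M[V]_n) : Prop :=
  forall (n m : nat) (a : 'M[V]_n) (c : 'M[V]_m), (0 < n)%N -> (0 < m)%N ->
    D (n + m)%N (block_mx a 0 0 c) -> D n a /\ D m c.

Definition einv (R : realType) (x : \bar R) : \bar R :=
  if x == 0%E then +oo%E else if x == +oo%E then 0%E else ((fine x)^-1)%:E.

(* delta_D(a,c)(b) = [ sup { t in [0,+oo] : [a sb; 0 c] in D for all s in [0,t] } ]^-1.
   The supremum is taken in [0,+oo] (hence the max with 0, which only matters
   for an empty set). *)
Definition delta (R : realType) (V : lmodType R[i]) (D : forall n : nat, set 'M[V]_n)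
  (n m : nat) (a : 'M[V]_n) (c : 'M[V]_m) (b : 'M[V]_(n, m)) : \bar R :=
  einv (Order.max 0%E (ereal_sup
    [set t : \bar R | (0 <= t)%E /\
       forall s : R, 0 <= s -> (s%:E <= t)%E ->
         D (n + m)%N (block_mx a (scalemx (s%:C : R[i]) b) 0 c)])).

Definition tdelta (R : realType) (V : lmodType R[i]) (D : forall n : nat, set 'M[V]_n)
  (n : nat) (a c : 'M[V]_n) : \bar R := delta D a c (a - c).

(* Identification of (V^{k x k})^{p x p} with V^{pk x pk}: the entry (r, s)
   of the flattened matrix is entry (r2, s2) of block (r1, s1), where
   r = r1 * k + r2 (lexicographic enumeration of 'I_p * 'I_k). *)
Definition flat_idx (p k : nat) (r : 'I_(p * k)) : 'I_p * 'I_k :=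
  enum_val (cast_ord (esym (mxvec_cast p k)) r).

(* The matrix T (x) I_k acting blockwise on V^{pk x pk}, under the above
   identification. *)
Definition kronI (K : pzRingType) (k p : nat) (T : 'M[K]_p) : 'M[K]_(p * k) :=
  \matrix_(r, s) (T (flat_idx r).1 (flat_idx s).1 *+ ((flat_idx r).2 == (flat_idx s).2)).

(* f : C_nc -> (D_k)_nc is a noncommutative function (levels p >= 1); the
   p-th level of (D_k)_nc is D_{pk} (elements of V^{pk x pk}, viewed as
   p x p block matrices with k x k blocks). *)
Definition nc_fun_into (R : rcfType) (V : lmodType R[i]) (D : forall n : nat, set 'M[V]_n)
  (k : nat) (f : forall p : nat, 'M[R[i]]_p -> 'M[V]_(p * k)) : Prop :=
  [/\ (forall (p : nat) (Z : 'M[R[i]]_p), (0 < p)%N -> D (p * k)%N (f p Z)),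
      (forall (p q : nat) (X : 'M[R[i]]_p) (Y : 'M[R[i]]_q), (0 < p)%N -> (0 < q)%N ->
         f (p + q)%N (block_mx X 0 0 Y)
         = castmx (esym (mulnDl p q k), esym (mulnDl p q k))
             (block_mx (f p X) 0 0 (f q Y))) &
      (forall (p : nat) (T Z : 'M[R[i]]_p), (0 < p)%N -> T \in unitmx ->
         f p (invmx T *m Z *m T)
         = rmulmx (lmulmx (kronI k (invmx T)) (f p Z)) (kronI k T))].

Definition nc_constant (R : rcfType) (X : nat -> Type)
  (f : forall p : nat, 'M[R[i]]_p -> X p) : Prop :=
  forall (p : nat) (Z W : 'M[R[i]]_p), (0 < p)%N -> f p Z = f p W.

(* (i) => (ii) is a specialisation.  (ii) => (iii): after a permutation of
   indices, [a, s(a-c); 0, c] (+) [c, 0; 0, a] becomes [a(+)c, s B; 0, a(+)c]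
   with B = [0, a-c; 0, 0], so delta~(a, c) = 0 forces delta(a(+)c, a(+)c)(B) = 0.
   (iii) => (iv): conjugating Z (+) W by the shear [1, s; 0, 1] shows that
   [f Z, s (f Z - f W); 0, f W] lies in D for every s >= 0, i.e.
   delta~(f Z, f W) = 0.  (iv) => (i): if delta(a, c)(b) = 0 with b <> 0, then
   Z |-> I (x) (a (+) c) + Z (x) [0, b; 0, 0] is a nonconstant nc function
   into D.  Its values lie in D for Z = s >= 0 by hypothesis, for complex
   scalars after a unitary change of phase (P2), for diagonal Z by direct sums,
   for normal Z by the spectral theorem, and for arbitrary Z by (P3), since up
   to a permutation the value at the Hermitian dilation [0, Z; Z^*, 0] is the
   direct sum of the values at Z and Z^*. *)

From Pilot Require Import Defs.
From HB Require Import structures.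
From mathcomp Require Import all_boot all_order all_algebra.
From mathcomp Require Import complex.
From mathcomp Require Import classical_sets reals ereal topology tvs.
From mathcomp Require Import perm spectral boolp.
Set Implicit Arguments. Unset Strict Implicit. Unset Printing Implicit Defensive.
Import Order.TTheory GRing.Theory Num.Theory.
Local Open Scope ring_scope.
Local Open Scope complex_scope.
Local Open Scope sesquilinear_scope.

Definition block_mxE := (block_mxEul, block_mxEur, block_mxEdl, block_mxEdr).

Lemma index_allpairs_pair (S T : eqType) (s : seq S) (t : seq T) x y :
  uniq s -> x \in s -> y \in t ->
  index (x, y) [seq (a, b) | a <- s, b <- t] = (index x s * size t + index y t)%N.
Proof.
elim: s => // a s IH /= /andP[as_ s_uniq]; rewrite in_cons index_cat.
case: eqVneq => [<- _ yt|ax /= xs yt].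
  by rewrite mem_map ?yt ?index_map //; move=> ? ? [].
have -> : ((x, y) \in [seq (a, b) | b <- t]) = false.
  by apply/mapP => -[? _ [xa _]]; rewrite xa eqxx in ax.
by rewrite size_map IH // mulSn addnA.
Qed.

Lemma val_mxvec_index p k (i : 'I_p) (u : 'I_k) : val (mxvec_index i u) = (i * k + u)%N.
Proof.
have enum_prod : enum {: 'I_p * 'I_k} = [seq (a, b) | a <- enum 'I_p, b <- enum 'I_k].
  by rewrite enumT unlock.
rewrite /= /enum_rank enum_rank_in.unlock insubdK; last first.
  by rewrite unfold_in /= cardE index_mem mem_enum.
rewrite enum_prod index_allpairs_pair ?enum_uniq ?mem_enum //.
by rewrite !index_enum_ord size_enum_ord.
Qed.

Lemma flat_idx_mxvec_index p k (i : 'I_p) (u : 'I_k) : flat_idx (mxvec_index i u) = (i, u).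
Proof. by rewrite /flat_idx cast_ordK enum_rankK. Qed.

Lemma mxvec_index_lshift p q k (i : 'I_p) (u : 'I_k) :
  cast_ord (mulnDl p q k) (mxvec_index (lshift q i) u) = lshift (q * k) (mxvec_index i u).
Proof.
apply: val_inj; move: (val_mxvec_index (lshift q i) u) (val_mxvec_index i u).
by rewrite /= => -> ->.
Qed.

Lemma mxvec_index_rshift p q k (j : 'I_q) (u : 'I_k) :
  cast_ord (mulnDl p q k) (mxvec_index (rshift p j) u) = rshift (p * k) (mxvec_index j u).
Proof.
apply: val_inj; move: (val_mxvec_index (rshift p j) u) (val_mxvec_index j u).
by rewrite /= => -> ->; rewrite mulnDl addnA.
Qed.

Lemma sum_pair (X : nmodType) (I J : finType) (F : I * J -> X) :
  \sum_l F l = \sum_i \sum_j F (i, j).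
Proof. by rewrite pair_bigA; apply: eq_bigr => -[]. Qed.

Lemma sum_mxvec_index (X : nmodType) p k (G : 'I_(p * k) -> X) :
  \sum_l G l = \sum_i \sum_u G (mxvec_index i u).
Proof. by rewrite (reindex _ (curry_mxvec_bij p k)) sum_pair. Qed.

Lemma sum_scale_delta (K : pzRingType) (X : lmodType K) (I : finType) (x : I) (a : K)
    (F : I -> X) :
  \sum_l (a *+ (x == l)) *: F l = a *: F x.
Proof.
rewrite (bigD1 x) //= eqxx mulr1n big1 ?addr0 // => l.
by rewrite eq_sym => /negbTE ->; rewrite mulr0n scale0r.
Qed.

Lemma sum_scale_deltar (K : pzRingType) (X : lmodType K) (I : finType) (x : I) (a : K)
    (F : I -> X) :
  \sum_l (a *+ (l == x)) *: F l = a *: F x.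
Proof. by under eq_bigr => l _ do rewrite eq_sym; exact: sum_scale_delta. Qed.

Lemma sum_mul_delta (K : pzSemiRingType) (I : finType) (x : I) (F : I -> K) :
  \sum_l (x == l)%:R * F l = F x.
Proof.
rewrite (bigD1 x) //= eqxx mul1r big1 ?addr0 // => l.
by rewrite eq_sym => /negbTE ->; rewrite mul0r.
Qed.

Lemma sum_double_scale (K : pzRingType) (X : lmodType K) (I J : finType)
    (al : J -> K) (be : I -> K) (ga : I -> J -> K) (w : X) :
  \sum_j al j *: \sum_i be i *: (ga i j *: w) = (\sum_j al j * \sum_i be i * ga i j) *: w.
Proof.
rewrite scaler_suml; apply: eq_bigr => j _.
by rewrite -scalerA scaler_suml; congr (_ *: _); apply: eq_bigr => i _; rewrite scalerA.
Qed.

Lemma scalemxE (K : pzRingType) (X : lmodType K) p q (x : K) (W : 'M[X]_(p, q)) i j :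
  Defs.scalemx x W i j = x *: W i j.
Proof. exact: mxE. Qed.

Definition sum_map (I J I' J' : Type) (f : I -> I') (g : J -> J') (x : I + J) : I' + J' :=
  match x with inl a => inl (f a) | inr b => inr (g b) end.

Lemma sum_map_bij (I J I' J' : Type) (f : I -> I') (g : J -> J') :
  bijective f -> bijective g -> bijective (sum_map f g).
Proof.
case=> f' fK f'K [g' gK g'K]; exists (sum_map f' g') => -[a|b] /=;
by rewrite ?fK ?gK ?f'K ?g'K.
Qed.

Lemma unsplit_bij n m : bijective (@unsplit n m).
Proof. by exists (@split n m); [exact: unsplitK | exact: splitK]. Qed.

Definition unitary_fun (R : rcfType) (I : finType) (U : I -> I -> R[i]) : Prop :=
  forall x y, \sum_l U x l * (U y l)^* = (x == y)%:R.

Lemma unitarymx_fun (R : rcfType) p (U : 'M[R[i]]_p) : U \is unitarymx -> unitary_fun U.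
Proof.
move=> /unitarymxP UU i j; have /matrixP/(_ i j) := UU; rewrite !mxE => <-.
by apply: eq_bigr => l _; rewrite !mxE.
Qed.

(** * Membership in D of matrices indexed by finite types *)

Section FunMatrices.
Variables (R : rcfType) (V : lmodType R[i]) (D : forall n : nat, set 'M[V]_n).
Arguments D : clear implicits.

Definition fun_mx (I : finType) (F : I -> I -> V) : 'M[V]_#|I| :=
  \matrix_(i, j) F (enum_val i) (enum_val j).

(* This depends on the chosen enumeration of I, but only up to a permutation
   of indices, which is irrelevant under (P2) (Dfun_reindex). *)
Definition Dfun (I : finType) (F : I -> I -> V) : Prop := D #|I| (fun_mx F).

Lemma eq_Dfun (I : finType) (F G : I -> I -> V) :
  (forall x y, F x y = G x y) -> Dfun F -> Dfun G.
Proof. by move=> FG; congr D; apply/matrixP => i j; rewrite !mxE FG. Qed.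

Hypothesis P2D : P2 D.

Lemma D_perm N (s : {perm 'I_N}) W : D N W -> D N (\matrix_(i, j) W (s i) (s j)).
Proof.
case: N s W => [|N] s W DW; first by congr D: DW; apply/matrixP => -[].
pose P : 'M[R[i]]_N.+1 := \matrix_(i, j) (s i == j)%:R.
have P_unitary : unitary P.
  apply/matrixP => i j; rewrite !mxE.
  under eq_bigr => l _ do rewrite !mxE conjc_nat.
  by rewrite sum_mul_delta (inj_eq perm_inj) eq_sym.
congr D: (P2D (ltn0Sn N) DW P_unitary); apply/matrixP => i j; rewrite !mxE.
under eq_bigr => l _ do rewrite !mxE conjc_nat.
rewrite (sum_scale_delta (s j)) scale1r.
under eq_bigr => l _ do rewrite mxE.
by rewrite (sum_scale_delta (s i)) scale1r.
Qed.

Lemma D_reindex M N (h : 'I_M -> 'I_N) W : bijective h -> D N W ->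
  D M (\matrix_(i, j) W (h i) (h j)).
Proof.
move=> bh; have MN : M = N by have := bij_eq_card bh; rewrite !card_ord.
subst N; have hinj : injective h := bij_inj bh.
by move=> /(D_perm (perm hinj)); congr D; apply/matrixP => i j; rewrite !mxE !permE.
Qed.

Lemma Dfun_reindex (I J : finType) (g : J -> I) F : bijective g -> Dfun F ->
  Dfun (fun x y => F (g x) (g y)).
Proof.
case=> g' gK g'K DF.
have bh : bijective (fun i : 'I_#|J| => enum_rank (g (enum_val i))).
  by exists (fun i => enum_rank (g' (enum_val i))) => i; rewrite enum_rankK ?gK ?g'K enum_valK.
by congr D: (D_reindex bh DF); apply/matrixP => i j; rewrite !mxE !enum_rankK.
Qed.

Lemma Dfun_reindexE (I J : finType) (g : J -> I) F : bijective g ->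
  Dfun F <-> Dfun (fun x y => F (g x) (g y)).
Proof.
move=> bg; split; first exact: Dfun_reindex.
have [g' gK g'K] := bg; have bg' : bijective g' by exists g.
by move=> /(Dfun_reindex bg'); apply: eq_Dfun => x y; rewrite !g'K.
Qed.

Lemma D_Dfun n W : D n W <-> Dfun (fun i j : 'I_n => W i j).
Proof.
split=> [/(D_reindex (@enum_val_bij 'I_n))|/(D_reindex (@enum_rank_bij 'I_n))].
  by congr D; apply/matrixP => i j; rewrite !mxE.
by congr D; apply/matrixP => i j; rewrite !mxE !enum_rankK.
Qed.

Lemma Dfun_unitary (I : finType) (U : I -> I -> R[i]) F : (0 < #|I|)%N ->
  unitary_fun U -> Dfun F -> Dfun (fun x y => \sum_l (U y l)^* *: \sum_l' U x l' *: F l' l).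
Proof.
move=> I_gt0 U_unitary DF.
pose mU : 'M[R[i]]_#|I| := \matrix_(i, j) U (enum_val i) (enum_val j).
have mU_unitary : unitary mU.
  apply/matrixP => i j; rewrite !mxE.
  under eq_bigr => l _ do rewrite !mxE.
  rewrite -(big_enum_val (fun l => U (enum_val i) l * (U (enum_val j) l)^*)) /=.
  by rewrite U_unitary (inj_eq enum_val_inj).
congr D: (P2D I_gt0 DF mU_unitary); apply/matrixP => i j; rewrite /rmulmx /lmulmx !mxE.
under eq_bigr => l _ do rewrite !mxE.
under eq_bigr => l _ do under eq_bigr => l' _ do rewrite !mxE.
rewrite [RHS]big_enum_val; apply: eq_bigr => l _.
by rewrite [in RHS]big_enum_val.
Qed.

End FunMatrices.

Section BlockFunctions.
Variables (R : rcfType) (V : lmodType R[i]).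

Definition block_fun (I J : Type) (A : I -> I -> V) (B : I -> J -> V)
    (C : J -> I -> V) (G : J -> J -> V) (x y : I + J) : V :=
  match x, y with
  | inl x, inl y => A x y | inl x, inr y => B x y
  | inr x, inl y => C x y | inr x, inr y => G x y
  end.

Definition dsum_fun (I J : Type) (F : I -> I -> V) (G : J -> J -> V) :=
  block_fun F (fun _ _ => 0) (fun _ _ => 0) G.

Variable D : forall n : nat, set 'M[V]_n.
Arguments D : clear implicits.
Hypothesis P2D : P2 D.

Lemma D_block_mxE n m (A : 'M[V]_n) (B : 'M[V]_(n, m)) (C : 'M[V]_(m, n)) (G : 'M[V]_m) :
  D (n + m) (block_mx A B C G) <->
  Dfun D (block_fun (fun i j => A i j) (fun i j => B i j) (fun i j => C i j) (fun i j => G i j)).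
Proof.
rewrite (D_Dfun P2D) (Dfun_reindexE P2D _ (unsplit_bij n m)).
by split; apply: eq_Dfun => -[x|x] [y|y]; rewrite /= ?block_mxE.
Qed.

Lemma D_block_fun_mx (I J : finType) (F : I -> I -> V) (G : J -> J -> V) :
  D (#|I| + #|J|) (block_mx (fun_mx F) 0 0 (fun_mx G)) <-> Dfun D (dsum_fun F G).
Proof.
rewrite D_block_mxE (Dfun_reindexE P2D _ (sum_map_bij (@enum_val_bij I) (@enum_val_bij J))).
by split; apply: eq_Dfun => -[x|x] [y|y]; rewrite /= !mxE.
Qed.

Lemma Dfun_dsum_blocks (I J : finType) (F : I -> I -> V) (G : J -> J -> V) :
  P3 D -> (0 < #|I|)%N -> (0 < #|J|)%N -> Dfun D (dsum_fun F G) -> Dfun D F /\ Dfun D G.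
Proof. by move=> P3D I_gt0 J_gt0 /D_block_fun_mx /P3D; apply. Qed.

Hypothesis ncD : nc_set D.

Lemma Dfun_dsum (I J : finType) (F : I -> I -> V) (G : J -> J -> V) :
  (0 < #|I|)%N -> (0 < #|J|)%N -> Dfun D F -> Dfun D G -> Dfun D (dsum_fun F G).
Proof. by move=> I_gt0 J_gt0 DF DG; apply/D_block_fun_mx; exact: ncD. Qed.

Lemma Dfun_bdiag (J : finType) p (H : 'I_p -> J -> J -> V) : (0 < p)%N -> (0 < #|J|)%N ->
  (forall i, Dfun D (H i)) ->
  Dfun D (fun x y : 'I_p * J => if x.1 == y.1 then H x.1 x.2 y.2 else 0).
Proof.
move=> + J_gt0; elim: p H => [//|[|p] IH] H _ DH.
  have bg : bijective (fun y : J => (ord0 : 'I_1, y)).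
    by exists snd => // -[i y] /=; rewrite (ord1 i).
  by apply/(Dfun_reindexE P2D _ bg); apply: eq_Dfun (DH ord0).
pose g (z : J + ('I_p.+1 * J)) : 'I_p.+2 * J :=
  match z with inl y => (ord0, y) | inr (i, y) => (lift ord0 i, y) end.
have bg : bijective g.
  exists (fun x : 'I_p.+2 * J =>
            if unlift ord0 x.1 is Some i then inr (i, x.2) else inl x.2).
    by case=> [y|[i y]] /=; rewrite ?unlift_none ?liftK.
  by case=> i y /=; case: unliftP => [j ->|->].
have PJ_gt0 : (0 < #|{: 'I_p.+1 * J}|)%N by rewrite card_prod card_ord muln_gt0.
apply/(Dfun_reindexE P2D _ bg).
have := Dfun_dsum J_gt0 PJ_gt0 (DH ord0) (IH _ isT (fun i => DH (lift ord0 i))).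
by apply: eq_Dfun => -[x|[i x]] [y|[j y]] //=; rewrite ?eqxx ?(inj_eq (@lift_inj _ ord0)).
Qed.

End BlockFunctions.

Lemma delta_eq0P (R : realType) (V : lmodType R[i]) (D : forall n : nat, set 'M[V]_n)
    n m (a : 'M[V]_n) (c : 'M[V]_m) b :
  delta D a c b = 0%E <->
  (forall s : R, 0 <= s -> D (n + m)%N (block_mx a (Defs.scalemx s%:C b) 0 c)).
Proof.
split=> [|Dray]; last first.
  rewrite /delta ereal_supy ?maxey; last by split=> // s s_ge0 _; exact: Dray.
  by rewrite /einv eqxx.
move=> delta0 s s_ge0; apply: contrapT => notD; move: delta0.
rewrite /delta; set x := Order.max _ _.
have x_le_s : (x <= s%:E)%E.
  rewrite ge_max lee_fin s_ge0 /=; apply: ge_ereal_sup => t [t_ge0 Dt].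
  by rewrite leNgt; apply/negP => /ltW st; exact/notD/Dt.
have x_fin : x = (fine x)%:E.
  by rewrite fineK // ge0_fin_numE ?(le_lt_trans x_le_s) ?ltry // le_max lexx.
rewrite /einv; case: ifPn => // x_neq0; rewrite x_fin /= => /eqP.
by rewrite eqe invr_eq0 -eqe -x_fin (negbTE x_neq0).
Qed.

(** * The pencil I (x) [a 0; 0 c] + M (x) [0 b; 0 0] *)

Section Pencil.
Variables (R : rcfType) (V : lmodType R[i]) (n m : nat).
Variables (a : 'M[V]_n) (b : 'M[V]_(n, m)) (c : 'M[V]_m).

(* The block matrix [I_p (x) a, M (x) b; 0, I_p (x) c], with rows and columns
   indexed by (index in 'I_p, index in the blocks of [a b; 0 c]). *)
Definition pencil p (M : 'M[R[i]]_p) (x y : 'I_p * ('I_n + 'I_m)) : V :=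
  match x.2, y.2 with
  | inl u, inl v => (x.1 == y.1)%:R *: a u v
  | inl u, inr v => M x.1 y.1 *: b u v
  | inr u, inl v => 0
  | inr u, inr v => (x.1 == y.1)%:R *: c u v
  end.

(* (U (x) I_n) (+) (U' (x) I_m), in the indexing of [pencil]. *)
Definition dsum_kron p (U U' : 'M[R[i]]_p) (x y : 'I_p * ('I_n + 'I_m)) : R[i] :=
  (if x.2 is inl _ then U else U') x.1 y.1 * (x.2 == y.2)%:R.

Lemma sum_dsum_kron p (U U' : 'M[R[i]]_p) x (G : 'I_p * ('I_n + 'I_m) -> V) :
  \sum_l dsum_kron U U' x l *: G l =
  \sum_i (if x.2 is inl _ then U else U') x.1 i *: G (i, x.2).
Proof.
rewrite sum_pair; apply: eq_bigr => i _.
by under eq_bigr => w _ do rewrite /dsum_kron /= mulr_natr; exact: sum_scale_delta.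
Qed.

Lemma sum_conj_dsum_kron p (U U' : 'M[R[i]]_p) x (G : 'I_p * ('I_n + 'I_m) -> V) :
  \sum_l (dsum_kron U U' x l)^* *: G l =
  \sum_i ((if x.2 is inl _ then U else U') x.1 i)^* *: G (i, x.2).
Proof.
rewrite sum_pair; apply: eq_bigr => i _.
under eq_bigr => w _ do rewrite /dsum_kron rmorphM rmorph_nat /= mulr_natr.
exact: sum_scale_delta.
Qed.

Lemma dsum_kron_unitary p (U U' : 'M[R[i]]_p) :
  unitary_fun U -> unitary_fun U' -> unitary_fun (dsum_kron U U').
Proof.
move=> UU U'U [x1 x2] [y1 y2]; rewrite sum_pair exchange_big /= xpair_eqE.
under eq_bigr => w _ do (under eq_bigr => i _ do
  rewrite /dsum_kron /= rmorphM rmorph_nat mulrACA; rewrite -mulr_suml).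
rewrite -mulr_sumr sum_mul_delta eq_sym.
have [<-|_] := eqVneq x2 y2; last by rewrite mulr0 andbF.
by rewrite mulr1 andbT; case: x2 => _; rewrite ?UU ?U'U.
Qed.

Variable D : forall n : nat, set 'M[V]_n.
Arguments D : clear implicits.
Hypothesis P2D : P2 D.

Lemma Dfun_pencil_conj p (M U U' : 'M[R[i]]_p) : (0 < p)%N -> (0 < n + m)%N ->
  unitary_fun U -> unitary_fun U' -> Dfun D (pencil M) ->
  Dfun D (pencil (U *m M *m adjmx U')).
Proof.
move=> p_gt0 nm_gt0 UU U'U DM.
have I_gt0 : (0 < #|{: 'I_p * ('I_n + 'I_m)}|)%N.
  by rewrite card_prod card_sum !card_ord muln_gt0 p_gt0.
apply: eq_Dfun (Dfun_unitary P2D I_gt0 (dsum_kron_unitary UU U'U) DM) => -[i [u|u]] [j [v|v]];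
  under eq_bigr => l _ do rewrite sum_dsum_kron; rewrite sum_conj_dsum_kron /pencil /=.
- rewrite (sum_double_scale _ _ (fun i' j' => (i' == j')%:R)) -UU.
  congr (_ *: _); apply: eq_bigr => j' _.
  under eq_bigr => i' _ do rewrite mulrC eq_sym.
  by rewrite sum_mul_delta mulrC.
- rewrite (sum_double_scale _ _ M) !mxE; congr (_ *: _); apply: eq_bigr => j' _.
  by rewrite mulrC !mxE.
- by rewrite big1 // => j' _; rewrite big1 ?scaler0 // => i' _; rewrite scaler0.
- rewrite (sum_double_scale _ _ (fun i' j' => (i' == j')%:R)) -U'U.
  congr (_ *: _); apply: eq_bigr => j' _.
  under eq_bigr => i' _ do rewrite mulrC eq_sym.
  by rewrite sum_mul_delta mulrC.
Qed.

Hypotheses (ncD : nc_set D) (P3D : P3 D).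
Hypothesis nm_gt0 : (0 < n + m)%N.
Hypothesis ray : forall s : R, 0 <= s -> D (n + m) (block_mx a (Defs.scalemx s%:C b) 0 c).

Lemma Dfun_pencil_ray (s : R) : 0 <= s -> Dfun D (pencil (const_mx s%:C : 'M_1)).
Proof.
move=> s_ge0; have bg : bijective (fun x : 'I_1 * ('I_n + 'I_m) => x.2).
  by exists (pair ord0) => // -[i y] /=; rewrite (ord1 i).
have /(D_block_mxE P2D)/(Dfun_reindex P2D bg) := ray s_ge0.
by apply: eq_Dfun => -[i [u|u]] [j [v|v]];
  rewrite /pencil /= ?mxE ?(ord1 i) ?(ord1 j) ?eqxx ?scale1r.
Qed.

Lemma Dfun_pencil_scalar (la : R[i]) : Dfun D (pencil (const_mx la : 'M_1)).
Proof.
have [r r_ge0 la_norm] : exists2 r : R, 0 <= r & `|la| = r%:C.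
  by exists (Num.sqrt (complex.Re la ^+ 2 + complex.Im la ^+ 2)); rewrite ?sqrtr_ge0 ?normc_def.
pose phi : R[i] := if la == 0 then 1 else la / `|la|.
have phi_unitary : unitary_fun (const_mx phi : 'M_1).
  move=> i j; rewrite big_ord1 !mxE !ord1 eqxx -sqr_normc /phi.
  case: eqP => [_|/eqP la_neq0]; first by rewrite normr1 expr1n.
  by rewrite normrM normfV normr_id divff ?expr1n // normr_eq0.
have one_unitary : unitary_fun (1%:M : 'M[R[i]]_1).
  by move=> i j; rewrite big_ord1 !mxE !ord1 eqxx ?rmorph1 ?mulr1.
suff -> : const_mx la = (const_mx phi : 'M_1) *m const_mx r%:C *m adjmx 1%:M :> 'M_1.
  exact: Dfun_pencil_conj (ltn0Sn 0) nm_gt0 phi_unitary one_unitary (Dfun_pencil_ray r_ge0).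
apply/matrixP => i j; rewrite !(mxE, big_ord1) !ord1 eqxx conjc_nat mulr1.
rewrite -la_norm /phi; case: eqP => [->|/eqP la_neq0]; first by rewrite normr0 mulr0.
by rewrite mulfVK // normr_eq0.
Qed.

Lemma Dfun_pencil_diag p (d : 'rV[R[i]]_p) : (0 < p)%N -> Dfun D (pencil (diag_mx d)).
Proof.
move=> p_gt0; have nm_card : (0 < #|{: 'I_n + 'I_m}|)%N by rewrite card_sum !card_ord.
have bg : bijective (fun w : 'I_n + 'I_m => (ord0 : 'I_1, w)).
  by exists snd => // -[k w] /=; rewrite (ord1 k).
have /(Dfun_bdiag P2D ncD p_gt0 nm_card) : forall i,
    Dfun D (fun w w' => pencil (const_mx (d 0 i) : 'M_1) (ord0, w) (ord0, w')).
  by move=> i; exact: (Dfun_reindex P2D bg (Dfun_pencil_scalar _)).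
by apply: eq_Dfun => -[i [u|u]] [j [v|v]]; rewrite /pencil /= ?mxE;
  case: eqP; rewrite ?scale1r ?mulr1n ?mulr0n ?scale0r.
Qed.

Lemma Dfun_pencil_normal p (M : 'M[R[i]]_p) : (0 < p)%N -> M \is normalmx ->
  Dfun D (pencil M).
Proof.
move=> p_gt0 /orthomx_spectralP; rewrite invmx_unitary ?spectral_unitarymx //.
set P := spectralmx M => M_spectral.
have adjP_unitary : unitary_fun (P^t*).
  by apply: unitarymx_fun; rewrite trmxC_unitary spectral_unitarymx.
have -> : M = P^t* *m diag_mx (spectral_diag M) *m adjmx (P^t*).
  by rewrite [LHS]M_spectral; congr (_ *m _); apply/matrixP => i j; rewrite !mxE conjcK.
exact: (Dfun_pencil_conj p_gt0 nm_gt0 adjP_unitary adjP_unitary (Dfun_pencil_diag _ p_gt0)).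
Qed.

Lemma Dfun_pencil_dilation p (M : 'M[R[i]]_p) : (0 < p)%N ->
  Dfun D (pencil (block_mx 0 M (M^t*) 0)) -> Dfun D (pencil M).
Proof.
move=> p_gt0.
pose g (z : ('I_p * ('I_n + 'I_m)) + ('I_p * ('I_n + 'I_m))) : 'I_(p + p) * ('I_n + 'I_m) :=
  match z with
  | inl (i, inl u) => (lshift p i, inl u) | inl (i, inr u) => (rshift p i, inr u)
  | inr (i, inl u) => (rshift p i, inl u) | inr (i, inr u) => (lshift p i, inr u)
  end.
have bg : bijective g.
  exists (fun x : 'I_(p + p) * ('I_n + 'I_m) =>
    match split x.1, x.2 with
    | inl i, inl u => inl (i, inl u) | inr i, inr u => inl (i, inr u)
    | inr i, inl u => inr (i, inl u) | inl i, inr u => inr (i, inr u)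
    end).
    by case=> [[i [u|u]]|[i [u|u]]] /=; rewrite ?(unsplitK (inl i)) ?(unsplitK (inr i)).
  by case=> k w /=; case: (split k) (splitK k) => i <-; case: w.
move/(Dfun_reindex P2D bg) => DH.
have PS_gt0 : (0 < #|{: 'I_p * ('I_n + 'I_m)}|)%N.
  by rewrite card_prod card_sum !card_ord muln_gt0 p_gt0.
suff /(Dfun_dsum_blocks P2D P3D PS_gt0 PS_gt0)[] : Dfun D (dsum_fun (pencil M) (pencil (M^t*))).
  by [].
apply: eq_Dfun DH => -[[i [u|u]]|[i [u|u]]] [[j [v|v]]|[j [v|v]]];
by rewrite /pencil /= ?block_mxE ?eq_lshift ?eq_rshift ?eq_lrshift ?eq_rlshift ?mxE ?scale0r.
Qed.

Lemma Dfun_pencil p (M : 'M[R[i]]_p) : (0 < p)%N -> Dfun D (pencil M).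
Proof.
move=> p_gt0; apply: (Dfun_pencil_dilation p_gt0).
have H_herm : (block_mx 0 M (M^t*) 0)^t* = block_mx 0 M (M^t*) 0.
  by rewrite tr_block_mx map_block_mx !trmx0 !map_mx0 trmxCK.
apply: Dfun_pencil_normal; first by rewrite addn_gt0 p_gt0.
by apply/normalmxP; rewrite H_herm.
Qed.

End Pencil.

(** * Conjugation by Kronecker products with the identity *)

Section KronIdentity.
Variables (K : comPzRingType) (X : lmodType K).

Lemma kronI_conjE p k (A B : 'M[K]_p) (F : 'M[X]_(p * k)) i u j v :
  rmulmx (lmulmx (kronI k A) F) (kronI k B) (mxvec_index i u) (mxvec_index j v) =
  \sum_j' B j' j *: \sum_i' A i i' *: F (mxvec_index i' u) (mxvec_index j' v).
Proof.
rewrite mxE sum_mxvec_index; apply: eq_bigr => j' _.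
under eq_bigr => v' _ do rewrite !mxE !flat_idx_mxvec_index /=.
rewrite sum_scale_deltar sum_mxvec_index; congr (_ *: _); apply: eq_bigr => i' _.
under eq_bigr => u' _ do rewrite !mxE !flat_idx_mxvec_index /=.
exact: sum_scale_delta.
Qed.

Lemma kronI_conj_dsumE p k (A B : 'M[K]_(p + p)) (F G : 'M[X]_(p * k)) i u j v :
  rmulmx (lmulmx (kronI k A)
      (castmx (esym (mulnDl p p k), esym (mulnDl p p k)) (block_mx F 0 0 G)))
    (kronI k B) (mxvec_index i u) (mxvec_index j v) =
  \sum_j' B (lshift p j') j *:
    \sum_i' A i (lshift p i') *: F (mxvec_index i' u) (mxvec_index j' v) +
  \sum_j' B (rshift p j') j *:
    \sum_i' A i (rshift p i') *: G (mxvec_index i' u) (mxvec_index j' v).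
Proof.
rewrite kronI_conjE big_split_ord /=; congr (_ + _); apply: eq_bigr => j' _;
  congr (_ *: _); rewrite big_split_ord /=.
  rewrite [X in _ + X]big1 ?addr0 => [|i' _]; last first.
    by rewrite castmxE /= esymK mxvec_index_rshift mxvec_index_lshift block_mxEdl mxE scaler0.
  by apply: eq_bigr => i' _; rewrite castmxE /= esymK !mxvec_index_lshift block_mxEul.
rewrite [X in X + _]big1 ?add0r => [|i' _]; last first.
  by rewrite castmxE /= esymK mxvec_index_lshift mxvec_index_rshift block_mxEur mxE scaler0.
by apply: eq_bigr => i' _; rewrite castmxE /= esymK !mxvec_index_rshift block_mxEdr.
Qed.

Definition shear_mx p (x : K) : 'M[K]_(p + p) := block_mx 1%:M x%:M 0 1%:M.

Lemma shear_mxN p (x : K) : shear_mx p (- x) *m shear_mx p x = 1%:M.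
Proof.
rewrite mulmx_block !mulmx1 !mul1mx !mul0mx !mulmx0 !addr0 !add0r -raddfD /= subrr.
by rewrite raddf0 -scalar_mx_block.
Qed.

Lemma kronI_conj_shear p k (x : K) (F G : 'M[X]_(p * k)) :
  rmulmx (lmulmx (kronI k (shear_mx p (- x)))
      (castmx (esym (mulnDl p p k), esym (mulnDl p p k)) (block_mx F 0 0 G)))
    (kronI k (shear_mx p x)) =
  castmx (esym (mulnDl p p k), esym (mulnDl p p k)) (block_mx F (Defs.scalemx x (F - G)) 0 G).
Proof.
apply/matrixP => r r'; case/mxvec_indexP: r => i u; case/mxvec_indexP: r' => j v.
rewrite kronI_conj_dsumE castmxE esymK /shear_mx.
case: (split i) (splitK i) => i' <-; case: (split j) (splitK j) => j' <-;
rewrite /= ?mxvec_index_lshift ?mxvec_index_rshift.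
all: under [X in X + _]eq_bigr => ? _ do
  (rewrite ?block_mxE mxE; under eq_bigr => ? _ do rewrite ?block_mxE mxE ?scale0r;
   rewrite ?sum_scale_delta ?big1_eq ?scaler0 ?scale0r).
all: under [X in _ + X]eq_bigr => ? _ do
  (rewrite ?block_mxE mxE; under eq_bigr => ? _ do rewrite ?block_mxE mxE ?scale0r;
   rewrite ?sum_scale_delta ?big1_eq ?scaler0 ?scale0r).
all: rewrite ?big1_eq ?addr0 ?add0r ?sum_scale_deltar ?scale1r ?block_mxE ?scalemxE ?mxE //.
by rewrite scalerBr scaleNr.
Qed.

Definition pencil_mx k (A B : 'M[X]_k) p (Z : 'M[K]_p) : 'M[X]_(p * k) :=
  \matrix_(r, s) (((flat_idx r).1 == (flat_idx s).1)%:R *: A (flat_idx r).2 (flat_idx s).2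
                   + Z (flat_idx r).1 (flat_idx s).1 *: B (flat_idx r).2 (flat_idx s).2).

Lemma pencil_mxE k (A B : 'M[X]_k) p (Z : 'M[K]_p) i u j v :
  pencil_mx A B Z (mxvec_index i u) (mxvec_index j v) = (i == j)%:R *: A u v + Z i j *: B u v.
Proof. by rewrite mxE !flat_idx_mxvec_index. Qed.

Lemma pencil_mx_dsum k (A B : 'M[X]_k) p q (Z : 'M[K]_p) (W : 'M[K]_q) :
  pencil_mx A B (block_mx Z 0 0 W) =
  castmx (esym (mulnDl p q k), esym (mulnDl p q k))
    (block_mx (pencil_mx A B Z) 0 0 (pencil_mx A B W)).
Proof.
apply/matrixP => r r'; case/mxvec_indexP: r => i u; case/mxvec_indexP: r' => j v.
rewrite castmxE esymK pencil_mxE.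
case: (split i) (splitK i) => i' <-; case: (split j) (splitK j) => j' <-;
by rewrite /= ?mxvec_index_lshift ?mxvec_index_rshift ?block_mxE ?pencil_mxE ?mxE
  ?eq_lshift ?eq_rshift ?eq_lrshift ?eq_rlshift /= ?mulr0n ?scale0r ?addr0.
Qed.

Lemma pencil_mx_similar k (A B : 'M[X]_k) p (S T Z : 'M[K]_p) : S *m T = 1%:M ->
  pencil_mx A B (S *m Z *m T) = rmulmx (lmulmx (kronI k S) (pencil_mx A B Z)) (kronI k T).
Proof.
move=> ST; apply/matrixP => r r'; case/mxvec_indexP: r => i u; case/mxvec_indexP: r' => j v.
rewrite kronI_conjE pencil_mxE.
under eq_bigr => j' _ do (under eq_bigr => i' _ do rewrite pencil_mxE scalerDr;
  rewrite big_split /= scalerDr).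
rewrite big_split /= !sum_double_scale; congr (_ *: _ + _ *: _).
  have /matrixP/(_ i j) := ST; rewrite !mxE => <-; apply: eq_bigr => j' _.
  under eq_bigr => i' _ do rewrite mulrC eq_sym.
  by rewrite sum_mul_delta mulrC.
by rewrite !mxE; apply: eq_bigr => j' _; rewrite mulrC mxE.
Qed.

End KronIdentity.

Section Separation.
Variables (R : realType) (V : lmodType R[i]) (D : forall n : nat, set 'M[V]_n).
Arguments D : clear implicits.
Hypotheses (ncD : nc_set D) (P2D : P2 D) (P3D : P3 D).

Definition delta_separating : Prop :=
  forall n m (a : 'M[V]_n) (c : 'M[V]_m) (b : 'M[V]_(n, m)),
    (0 < n)%N -> (0 < m)%N -> D n a -> D m c -> delta D a c b = 0%E -> b = 0.

Definition delta_diag_separating : Prop :=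
  forall n (a b : 'M[V]_n), (0 < n)%N -> D n a -> delta D a a b = 0%E -> b = 0.

Definition tdelta_separating : Prop :=
  forall n (a c : 'M[V]_n), (0 < n)%N -> D n a -> D n c -> tdelta D a c = 0%E -> a = c.

Definition no_nonconstant_nc_fun : Prop :=
  forall k, (0 < k)%N ->
    ~ exists f : forall p : nat, 'M[R[i]]_p -> 'M[V]_(p * k), nc_fun_into D f /\ ~ nc_constant f.

Lemma tdelta_separating_of_diag : delta_diag_separating -> tdelta_separating.
Proof.
move=> sep n a c n_gt0 Da Dc /delta_eq0P ray.
have nn_gt0 : (0 < n + n)%N by rewrite addn_gt0 n_gt0.
suff : block_mx (0 : 'M[V]_n) (a - c) (0 : 'M[V]_n) 0 = 0.
  move/matrixP => ac0; apply/matrixP => i j; move/eqP: (ac0 (lshift n i) (rshift n j)).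
  by rewrite block_mxEur !mxE subr_eq0 => /eqP.
apply: (sep _ _ _ nn_gt0 (ncD n_gt0 n_gt0 Da Dc)); apply/delta_eq0P => s s_ge0.
have unsplit2_bij := sum_map_bij (unsplit_bij n n) (unsplit_bij n n).
have := ncD nn_gt0 nn_gt0 (ray s s_ge0) (ncD n_gt0 n_gt0 Dc Da).
move/(D_block_mxE P2D)/(Dfun_reindex P2D unsplit2_bij).
(* Swap the two copies of c: blocks (a, c | c, a) become (a, c | a, c). *)
pose g (z : ('I_n + 'I_n) + ('I_n + 'I_n)) : ('I_n + 'I_n) + ('I_n + 'I_n) :=
  match z with
  | inl (inl x) => inl (inl x) | inl (inr x) => inr (inl x)
  | inr (inl x) => inr (inr x) | inr (inr x) => inl (inr x)
  end.
have bg : bijective g.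
  exists (fun z => match z with
    | inl (inl x) => inl (inl x) | inr (inl x) => inl (inr x)
    | inr (inr x) => inr (inl x) | inl (inr x) => inr (inr x)
    end); by case=> [[x|x]|[x|x]].
move/(Dfun_reindex P2D bg) => DS.
apply/(D_block_mxE P2D)/(Dfun_reindexE P2D _ unsplit2_bij).
apply: eq_Dfun DS => -[[x|x]|[x|x]] [[y|y]|[y|y]];
by rewrite /= ?block_mxE ?scalemxE ?block_mxE ?mxE ?scaler0.
Qed.

Lemma no_nonconstant_nc_fun_of_tdelta : tdelta_separating -> no_nonconstant_nc_fun.
Proof.
move=> sep k k_gt0 [f [[f_D f_dsum f_sim] f_nonconst]]; apply: f_nonconst => p Z W p_gt0.
apply: sep (f_D _ _ p_gt0) (f_D _ _ p_gt0) _; first by rewrite muln_gt0 p_gt0.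
apply/delta_eq0P => s s_ge0.
have shearK := shear_mxN p (s%:C : R[i]).
have shear_unit : shear_mx p (s%:C : R[i]) \in unitmx by case: (mulmx1_unit shearK).
have shear_inv : invmx (shear_mx p (s%:C : R[i])) = shear_mx p (- s%:C).
  by rewrite -[LHS]mul1mx -shearK -mulmxA mulmxV // mulmx1.
have pp_gt0 : (0 < p + p)%N by rewrite addn_gt0 p_gt0.
have := f_D _ (invmx (shear_mx p s%:C) *m block_mx Z 0 0 W *m shear_mx p s%:C) pp_gt0.
rewrite f_sim // f_dsum // shear_inv kronI_conj_shear.
have cast_bij : bijective (cast_ord (esym (mulnDl p p k))).
  by exists (cast_ord (mulnDl p p k)) => r; rewrite ?cast_ordK ?cast_ordKV.
move/(D_reindex P2D cast_bij); congr D; apply/matrixP => r r'.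
by rewrite [LHS]mxE castmxE esymK !cast_ordKV.
Qed.

Lemma delta_separating_of_nc_fun : no_nonconstant_nc_fun -> delta_separating.
Proof.
move=> rigid n m a c b n_gt0 m_gt0 Da Dc /delta_eq0P ray; apply: contrapT => b_neq0.
have nm_gt0 : (0 < n + m)%N by rewrite addn_gt0 n_gt0.
pose A : 'M[V]_(n + m) := block_mx a 0 0 c; pose B : 'M[V]_(n + m) := block_mx 0 b 0 0.
apply: (rigid _ nm_gt0); exists (fun p Z => pencil_mx A B Z); split; [split|].
- move=> p Z p_gt0; apply/(D_Dfun P2D).
  have bg : bijective (fun x : 'I_p * ('I_n + 'I_m) => mxvec_index x.1 (unsplit x.2)).
    exists (fun r => ((flat_idx r).1, split (flat_idx r).2)).
      by case=> i w; rewrite flat_idx_mxvec_index unsplitK.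
    by move=> r; case/mxvec_indexP: r => i u; rewrite flat_idx_mxvec_index /= splitK.
  apply/(Dfun_reindexE P2D _ bg).
  apply: eq_Dfun (Dfun_pencil P2D ncD P3D nm_gt0 ray Z p_gt0) => -[i [u|u]] [j [v|v]];
  by rewrite pencil_mxE /pencil /= ?block_mxE ?mxE ?scaler0 ?scale0r ?addr0 ?add0r.
- by move=> p q X Y _ _; exact: pencil_mx_dsum.
- by move=> p T Z _ T_unit; exact: pencil_mx_similar (mulVmx T_unit).
move=> f_const; apply: b_neq0; apply/matrixP => u v.
have /matrixP/(_ (mxvec_index 0 (lshift m u)) (mxvec_index 0 (rshift n v))) :=
  f_const 1 0 1%:M isT.
by rewrite !pencil_mxE /A /B !block_mxEur !mxE scale0r scale1r !add0r eqxx scale1r => <-.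
Qed.

End Separation.

Local Close Scope sesquilinear_scope.
Local Close Scope complex_scope.

Theorem theorem3p5 (R : realType) (V : topologicalLmodType R[i])
  (D : forall n : nat, set 'M[V]_n) :
  nc_set D -> P2 D -> P3 D ->
  [<->
    (* (i) *)
    (forall (n m : nat) (a : 'M[V]_n) (c : 'M[V]_m) (b : 'M[V]_(n, m)),
       (0 < n)%N -> (0 < m)%N -> D n a -> D m c -> delta D a c b = 0%E -> b = 0);
    (* (ii) *)
    (forall (n : nat) (a : 'M[V]_n) (b : 'M[V]_n),
       (0 < n)%N -> D n a -> delta D a a b = 0%E -> b = 0);
    (* (iii) *)
    (forall (n : nat) (a c : 'M[V]_n),
       (0 < n)%N -> D n a -> D n c -> tdelta D a c = 0%E -> a = c);
    (* (iv) *)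
    (forall k : nat, (0 < k)%N ->
       ~ exists f : forall p : nat, 'M[R[i]]_p -> 'M[V]_(p * k),
           nc_fun_into D f /\ ~ nc_constant f)].
Proof.
move=> ncD P2D P3D; tfae.
- by move=> sep n a b n_gt0 Da; exact: sep.
- exact: tdelta_separating_of_diag.
- exact: no_nonconstant_nc_fun_of_tdelta.
- exact: delta_separating_of_nc_fun.
Qed.
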